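(* Let $\mathcal{T}$ be a finite or countably infinite set and let $\mathbf{p} \ne \mathbf{q}$ be probability distributions on $\mathcal{T}$. Then there exists a strict total order $\prec^*$ on $\mathcal{T}$ such that the associated rank statistic $R$ is not uniformly distributed on $\{0,1\}$ for $m = 1$, and hence for every $m \ge 1$ the associated rank statistic is not uniformly distributed on $\{0,1,\dots,m\}$. Here, for a strict total order $\prec$ and a positive integer $m$, the associated rank statistic is $R = \sum_{j=1}^m \big(\mathbb{I}[X_j \prec X_0] + \mathbb{I}[X_j = X_0, U_j < U_0]\big)$, where $X_0 \sim \mathbf{q}$, $X_1,\dots,X_m \sim^{\mathrm{iid}} \mathbf{p}$, $U_0,\dots,U_m \sim^{\mathrm{iid}} \mathrm{Uniform}(0,1)$ are mutually independent.
   Context: $\mathbb{I}[\cdot]$ denotes the indicator of an event. *)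

From HB Require Import structures.
From mathcomp Require Import all_boot all_order all_algebra.
From mathcomp Require Import all_classical all_reals all_analysis.
Set Implicit Arguments. Unset Strict Implicit. Unset Printing Implicit Defensive.
Import Order.TTheory GRing.Theory Num.Theory.
Local Open Scope classical_set_scope.
Local Open Scope ring_scope.

Section Defs.
Context {R : realType} {T : countType}.

Definition is_prob_distr (p : T -> R) : Prop :=
  (forall t, 0 <= p t) /\ (\esum_(t in [set: T]) (p t)%:E = 1)%E.

Definition strict_total_order (lt : rel T) : Prop :=
  irreflexive lt /\ transitive lt /\ (forall x y, x != y -> lt x y || lt y x).

Definition rank_stat (lt : rel T) (m : nat) {Omega : Type}
    (X : nat -> Omega -> T) (U : nat -> Omega -> R) (w : Omega) : nat :=
  (\sum_(j < m) (lt (X j.+1 w) (X 0 w)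
                 + ((X j.+1 w == X 0 w) && (U j.+1 w < U 0 w)%R)))%N.

Definition rank_model (p q : T -> R) (m : nat) {d : measure_display}
    {Omega : measurableType d} (P : probability Omega R)
    (X : nat -> Omega -> T) (U : nat -> Omega -> R) : Prop :=
  (forall i t, (i <= m)%N -> measurable (X i @^-1` [set t])) /\
  (forall i, (i <= m)%N -> measurable_fun [set: Omega] (U i)) /\
  (forall t, P (X 0 @^-1` [set t]) = (q t)%:E) /\
  (forall i t, (1 <= i <= m)%N -> P (X i @^-1` [set t]) = (p t)%:E) /\
  (forall i (B : set R), (i <= m)%N -> measurable B ->
     P (U i @^-1` B) = (@lebesgue_measure R) (B `&` `[0%R, 1%R])) /\
  (forall (A : nat -> set T) (B : nat -> set R), (forall i, measurable (B i)) ->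
     P (\big[setI/setT]_(i < m.+1) (X i @^-1` A i `&` U i @^-1` B i)) =
     (\prod_(i < m.+1) (P (X i @^-1` A i) * P (U i @^-1` B i)))%E).

Definition rank_uniform (lt : rel T) (m : nat) {d : measure_display}
    {Omega : measurableType d} (P : probability Omega R)
    (X : nat -> Omega -> T) (U : nat -> Omega -> R) : Prop :=
  forall k, (k <= m)%N ->
    P [set w | rank_stat lt m X U w = k] = ((m.+1)%:R^-1 : R)%:E.

End Defs.

From HB Require Import structures.
From mathcomp Require Import all_boot all_order all_algebra.
From mathcomp Require Import all_classical all_reals all_analysis measurable_realfun.
From mathcomp Require Import ring lra.
Import Order.TTheory GRing.Theory Num.Theory.
Local Open Scope classical_set_scope.
Local Open Scope ring_scope.

(** Put the points where [p >= q] below those where [p < q].  Writing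
    [q = p + D] and [H b] for the [p]-mass strictly below [b] plus half of
    [p b], one finds [P(X_1 < X_0) + P(X_1 = X_0)/2 = 1/2 + sum_b D b * H b]
    [= 1/2 + sum_b D b * (H b - p{p >= q}) >= 1/2 + sum_b |D b| * p b / 2 > 1/2].
    Hence every summand of [R] has mean [> 1/2] and [E R > m/2], the mean of
    the uniform law on [{0, ..., m}].  Measure-theoretically only lower bounds
    are needed: the indicators in [R] dominate finite sums of indicators of
    cells [{X_j = a, X_0 = b, U_j \in I, U_0 \in J}], whose probabilities
    factor by independence, with [{U_j < U_0}] approximated from inside by a
    grid of mesh [1/n]. *)

Section split_order.
Context {T : countType}.

Definition split_order (S : pred T) : rel T :=
  fun x y => if S x == S y then (pickle x < pickle y)%N else S y.

Lemma split_order_total (S : pred T) : strict_total_order (split_order S).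
Proof.
split; [|split].
- by move=> x; rewrite /split_order eqxx ltnn.
- move=> y x z; rewrite /split_order.
  by case: (S x); case: (S y); case: (S z) => //=; exact: ltn_trans.
- move=> x y /negPf xy; rewrite /split_order eq_sym.
  have /negPf pxy : pickle x != pickle y by rewrite (inj_eq (pcan_inj pickleK)) xy.
  by case: (S x); case: (S y) => //=; rewrite -neq_ltn pxy.
Qed.

Lemma split_orderNS (S : pred T) x y : ~~ S x -> S y -> split_order S x y.
Proof. by rewrite /split_order => /negPf-> ->. Qed.

End split_order.

Section strict_total_order_sums.
Context {R : realFieldType} {T : countType} {l : rel T}.
Hypothesis hl : strict_total_order l.

Let l_irr x : l x x = false. Proof. exact: hl.1. Qed.

Let l_asym x y : l x y -> l y x = false.
Proof. by move=> xy; apply/negP => /(hl.2.1 _ _ _ xy); rewrite l_irr. Qed.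

Let l_trichotomy x y : ~~ l x y -> (x == y) || l y x.
Proof. by case: eqVneq => //= /hl.2.2 /orP[->|]. Qed.

Lemma sum_pairs_split (F : seq T) (f : T -> T -> R) : uniq F ->
  \sum_(a <- F) \sum_(b <- F) f a b =
  \sum_(a <- F) \sum_(b <- F | l a b) f a b + \sum_(a <- F) f a a
  + \sum_(a <- F) \sum_(b <- F | l b a) f a b.
Proof.
move=> uF; rewrite -!big_split /= big_seq [RHS]big_seq.
apply: eq_bigr => a aF; rewrite (bigD1_seq a) //= (bigID (l a)) /=.
have neq_lab b : (b != a) && l a b = l a b.
  by case: eqVneq => [->|]; rewrite ?l_irr.
have neq_nlab b : (b != a) && ~~ l a b = l b a.
  case: eqVneq => [->|ba] /=; first by rewrite l_irr.
  case lab: (l a b); first by rewrite l_asym.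
  by move/negbT/l_trichotomy: lab; rewrite eq_sym (negPf ba).
by rewrite (eq_bigl _ _ neq_lab) (eq_bigl _ _ neq_nlab) addrCA addrA.
Qed.

Lemma sum_lt_pairs_sq (F : seq T) (x : T -> R) : uniq F ->
  \sum_(a <- F) \sum_(b <- F | l a b) x a * x b =
  ((\sum_(a <- F) x a) ^+ 2 - \sum_(a <- F) x a ^+ 2) / 2.
Proof.
move=> uF; have := @sum_pairs_split F (fun a b => x a * x b) uF.
rewrite -big_distrlr /= -expr2.
have -> : \sum_(a <- F) \sum_(b <- F | l b a) x a * x b =
          \sum_(a <- F) \sum_(b <- F | l a b) x a * x b.
  rewrite (exchange_big_dep xpredT) //=.
  by apply: eq_bigr => a _; apply: eq_bigr => b _; rewrite mulrC.
under [\sum_(a <- F) x a * x a]eq_bigr do rewrite -expr2.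
by move=> ->; field.
Qed.

Lemma sum_lt_pairs_decomp (F : seq T) (p q : T -> R) : uniq F ->
  \sum_(a <- F) \sum_(b <- F | l a b) p a * q b + (\sum_(a <- F) p a * q a) / 2 =
  (\sum_(a <- F) p a) ^+ 2 / 2 +
  \sum_(b <- F) (q b - p b) * (\sum_(a <- F | l a b) p a + p b / 2).
Proof.
move=> uF.
have -> : \sum_(a <- F) \sum_(b <- F | l a b) p a * q b =
    \sum_(a <- F) \sum_(b <- F | l a b) p a * p b +
    \sum_(b <- F) (q b - p b) * \sum_(a <- F | l a b) p a.
  have -> : \sum_(b <- F) (q b - p b) * \sum_(a <- F | l a b) p a =
      \sum_(a <- F) \sum_(b <- F | l a b) p a * (q b - p b).
    rewrite (exchange_big_dep xpredT) //=.
    by apply: eq_bigr => b _; rewrite mulr_sumr; apply: eq_bigr => a _; rewrite mulrC.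
  rewrite -big_split /=; apply: eq_bigr => a _; rewrite -big_split /=.
  by apply: eq_bigr => b _; ring.
rewrite sum_lt_pairs_sq //.
have -> : \sum_(b <- F) (q b - p b) * (\sum_(a <- F | l a b) p a + p b / 2) =
    \sum_(b <- F) (q b - p b) * \sum_(a <- F | l a b) p a +
    (\sum_(a <- F) p a * q a - \sum_(a <- F) p a ^+ 2) / 2.
  rewrite -sumrB mulr_suml -big_split /=.
  by apply: eq_bigr => b _; ring.
by field.
Qed.

Context {S : pred T}.
Hypothesis hS : forall a b, ~~ S a -> S b -> l a b.

(** In [sum_lt_pairs_decomp], [pL + p b / 2] bounds the inner factor from
    below when [S b] (so [q b >= p b]) and [pL - p b / 2] from above otherwise,
    where [pL] is the [p]-mass of [~~ S]; the [pL] terms sum to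
    [pL * (sum q - sum p)]. *)
Lemma sum_lt_pairs_ge (F : seq T) (p q : T -> R) : uniq F ->
  (forall x, 0 <= p x) -> (forall x, S x -> p x <= q x) ->
  (forall x, ~~ S x -> q x <= p x) ->
  (\sum_(a <- F) p a) ^+ 2 / 2 +
  (\sum_(a <- F | ~~ S a) p a) * (\sum_(a <- F) q a - \sum_(a <- F) p a) +
  (\sum_(b <- F) `|q b - p b| * p b) / 2
  <= \sum_(a <- F) \sum_(b <- F | l a b) p a * q b + (\sum_(a <- F) p a * q a) / 2.
Proof.
move=> uF p0 Sle nSle; rewrite sum_lt_pairs_decomp // -addrA lerD2l.
set pL := \sum_(a <- F | ~~ S a) p a.
have below_S b : S b -> pL + p b / 2 <= \sum_(a <- F | l a b) p a + p b / 2.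
  move=> Sb; rewrite lerD2r /pL (big_mkcond (l^~ b)) (big_mkcond (fun a => ~~ S a)) /=.
  apply: ler_sum => a _; case: (boolP (S a)) => /= [_ | nSa]; last by rewrite hS.
  by case: ifP.
have below_nS b : b \in F -> ~~ S b ->
    \sum_(a <- F | l a b) p a + p b / 2 <= pL - p b / 2.
  move=> bF nSb; suff : \sum_(a <- F | l a b) p a + p b <= pL by lra.
  rewrite /pL (big_mkcond (l^~ b)) (big_mkcond (fun a => ~~ S a)) /=.
  rewrite [X in _ <= X](bigD1_seq b) //= nSb.
  rewrite (bigD1_seq b) //= l_irr add0r [X in X <= _]addrC lerD2l.
  apply: ler_sum => a _; case lab: (l a b) => //; case: (boolP (S a)) => //= Sa.
  by have := hS _ _ nSb Sa; rewrite (l_asym _ _ lab).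
have -> : pL * (\sum_(a <- F) q a - \sum_(a <- F) p a) +
    (\sum_(b <- F) `|q b - p b| * p b) / 2 =
    \sum_(b <- F) ((q b - p b) * pL + `|q b - p b| * p b / 2).
  by rewrite big_split /= -mulr_suml sumrB mulrC mulr_suml.
rewrite big_seq [X in _ <= X]big_seq; apply: ler_sum => b bF.
case: (boolP (S b)) => [Sb | nSb].
- have D0 : 0 <= q b - p b by rewrite subr_ge0 Sle.
  by rewrite ger0_norm //; have := below_S b Sb; nra.
- have D0 : q b - p b <= 0 by rewrite subr_le0 nSle.
  by rewrite ler0_norm //; have := below_nS b bF nSb; nra.
Qed.

End strict_total_order_sums.

Lemma ler_sum_subset {R : realFieldType} {T : eqType} (s s' : seq T) (h : T -> R) :
  uniq s -> uniq s' -> {subset s <= s'} -> (forall x, 0 <= h x) ->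
  \sum_(t <- s) h t <= \sum_(t <- s') h t.
Proof.
move=> us us' ss' h0; rewrite [X in _ <= X](bigID (mem s)) /=.
have -> : \sum_(t <- s' | t \in s) h t = \sum_(t <- s) h t.
  rewrite -big_filter; apply/perm_big/uniq_perm; rewrite ?filter_uniq //.
  by move=> x; rewrite mem_filter; case xs: (x \in s) => //=; rewrite ss'.
by rewrite lerDl sumr_ge0.
Qed.

Section prob_distr.
Context {R : realType} {T : countType}.
Implicit Types (p q : T -> R) (s : seq T).

Lemma prob_distr_sum_le1 p s : is_prob_distr p -> uniq s -> \sum_(t <- s) p t <= 1.
Proof.
move=> [p0 p1] us; rewrite -lee_fin -p1; apply: esum_ge.
exists [set` s]; first by split; [exact: finite_seq|].
by rewrite -sumEFin fsbig_seq.
Qed.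

Lemma prob_distr_sum_gt p e : is_prob_distr p -> 0 < e ->
  exists s, uniq s /\ 1 - e < \sum_(t <- s) p t.
Proof.
move=> [p0 p1] e0.
have : ((1 - e)%:E < \esum_(t in [set: T]) (p t)%:E)%E.
  by rewrite p1 lte_fin ltrBlDr ltrDl.
case/ereal_sup_gt => _ [X [finX _] <-].
rewrite fsbig_finite // sumEFin lte_fin => h.
by exists (finmap.enum_fset (fset_set X)); split => //; exact: finmap.fset_uniq.
Qed.

Lemma prob_distr_neq_lt p q : is_prob_distr p -> is_prob_distr q -> p <> q ->
  exists t, q t < p t.
Proof.
move=> hp hq npq; apply/not_existsP => hn.
have hle t : p t <= q t by rewrite leNgt; apply/negP => /(hn t).
have [t0 lt0] : exists t0, p t0 < q t0.
  apply/not_existsP => hn'; apply: npq; apply/funext => t.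
  by apply/eqP; rewrite eq_le hle /= leNgt; apply/negP => /(hn' t).
have [s [us hs]] : exists s, uniq s /\ 1 - (q t0 - p t0) < \sum_(t <- s) p t.
  by apply: prob_distr_sum_gt; rewrite // subr_gt0.
pose F := undup (t0 :: s).
have t0F : t0 \in F by rewrite mem_undup mem_head.
have hF : \sum_(t <- s) p t <= \sum_(t <- F) p t.
  apply: ler_sum_subset; rewrite ?undup_uniq //; last by case: hp.
  by move=> x xs; rewrite mem_undup in_cons xs orbT.
have hpq : \sum_(t <- F) p t + (q t0 - p t0) <= \sum_(t <- F) q t.
  rewrite (bigD1_seq t0) ?undup_uniq //= [X in _ <= X](bigD1_seq t0) ?undup_uniq //=.
  suff : \sum_(t <- F | t != t0) p t <= \sum_(t <- F | t != t0) q t by lra.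
  by apply: ler_sum => t _; exact: hle.
have := prob_distr_sum_le1 q F hq (undup_uniq _); lra.
Qed.

(** A lower bound for [P(X_1 < X_0) + P(X_1 = X_0, U_1 < U_0)] that only
    looks at values in [F] and at a grid of mesh [1/n] for the tie-break. *)
Definition below_prob_lb (l : rel T) (p q : T -> R) (F : seq T) (n : nat) : R :=
  \sum_(a <- F) \sum_(b <- F | l a b) p a * q b +
  (\sum_(a <- F) p a * q a) * (1 - n%:R^-1) / 2.

(** With [q t < p t] and [c = p t * (p t - q t) / 2], take [F] carrying all but
    [c / 4] of both masses and [n > 1 / c]: [sum_lt_pairs_ge] then gives
    [1/2 - c/4 - c/4 + c - c/2] as a strict lower bound. *)
Lemma exists_below_prob_lb_gt (l : rel T) p q :
  strict_total_order l -> (forall a b, q a <= p a -> p b < q b -> l a b) ->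
  is_prob_distr p -> is_prob_distr q -> p <> q ->
  exists F n, [/\ uniq F, (0 < n)%N & 1 / 2 < below_prob_lb l p q F n].
Proof.
move=> hl hlpq hp hq npq.
have [t hpq] := prob_distr_neq_lt _ _ hp hq npq.
have [p0 q0] := (hp.1, hq.1).
pose c := p t * (p t - q t) / 2.
have c0 : 0 < c by rewrite !(divr_gt0, mulr_gt0) ?subr_gt0 // (le_lt_trans (q0 t)).
pose e := c / 4.
have [s1 [us1 hs1]] := prob_distr_sum_gt p e hp (divr_gt0 c0 (ltr0n _ 4)).
have [s2 [us2 hs2]] := prob_distr_sum_gt q e hq (divr_gt0 c0 (ltr0n _ 4)).
pose F := undup (t :: s1 ++ s2).
have uF : uniq F := undup_uniq _.
have sub1 : {subset s1 <= F} by move=> x xs; rewrite mem_undup in_cons mem_cat xs orbT.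
have sub2 : {subset s2 <= F} by move=> x xs; rewrite mem_undup in_cons mem_cat xs !orbT.
have tF : t \in F by rewrite mem_undup mem_head.
set sp := \sum_(a <- F) p a; set sq := \sum_(a <- F) q a.
have sp_gt : 1 - e < sp by apply: (lt_le_trans hs1); apply: ler_sum_subset.
have sq_gt : 1 - e < sq by apply: (lt_le_trans hs2); apply: ler_sum_subset.
have sp_le1 : sp <= 1 := prob_distr_sum_le1 p F hp uF.
have sq_le1 : sq <= 1 := prob_distr_sum_le1 q F hq uF.
pose S x := p x < q x.
have hS a b : ~~ S a -> S b -> l a b by rewrite /S -leNgt; exact: hlpq.
have Sle x : S x -> p x <= q x by move/ltW.
have nSle x : ~~ S x -> q x <= p x by rewrite /S -leNgt.
have gain := sum_lt_pairs_ge hl hS F p q uF p0 Sle nSle.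
rewrite -/sp -/sq in gain.
have gain_t : 2 * c <= \sum_(b <- F) `|q b - p b| * p b.
  have -> : 2 * c = `|q t - p t| * p t.
    by rewrite distrC ger0_norm ?subr_ge0 ?ltW // /c; field.
  rewrite (bigD1_seq t) //= lerDl.
  by apply: sumr_ge0 => b _; rewrite mulr_ge0.
pose n := Num.bound c^-1.
have n_gt : c^-1 < n%:R by apply: archi_boundP; rewrite invr_ge0 ltW.
have n0 : (0 < n)%N by rewrite -(ltr_nat R) (lt_trans _ n_gt) ?invr_gt0.
exists F, n; split => //.
set pL := \sum_(a <- F | ~~ S a) p a in gain.
set spq := \sum_(a <- F) p a * q a in gain *.
have pL_ge0 : 0 <= pL by apply: sumr_ge0.
have pL_le : pL <= sp by rewrite /pL big_mkcond; apply: ler_sum => a _; case: ifP.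
have spq_ge0 : 0 <= spq by apply: sumr_ge0 => a _; rewrite mulr_ge0.
have spq_le : spq <= sp.
  apply: ler_sum => a _; rewrite ler_piMr //.
  by have := prob_distr_sum_le1 q [:: a] hq isT; rewrite big_seq1.
have inv_n : n%:R^-1 < c by rewrite -[c]invrK ltf_pV2 ?posrE ?invr_gt0 ?ltr0n.
have inv_n0 : 0 < n%:R^-1 :> R by rewrite invr_gt0 ltr0n.
have sp_sq : 1 - 2 * e <= sp ^+ 2 by nra.
have pL_diff : - e <= pL * (sq - sp) by nra.
have spq_n : spq * n%:R^-1 < c by nra.
rewrite /below_prob_lb -/spq mulrBr mulr1.
by move: gain; rewrite /e in sp_sq pL_diff *; lra.
Qed.

End prob_distr.

Section ge0_expectation.
Context {d : measure_display} {Omega : measurableType d} {R : realType}.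
Variable P : probability Omega R.

Definition ge0_mfun (f : Omega -> R) : Prop :=
  measurable_fun [set: Omega] f /\ forall w, 0 <= f w.

Lemma ge0_mfun_indic (A : set Omega) : measurable A -> ge0_mfun (\1_A).
Proof. by move=> mA; split=> [|w]; [exact: measurable_indic | rewrite indicE]. Qed.

Lemma ge0_mfun_scale (k : R) (f : Omega -> R) :
  0 <= k -> ge0_mfun f -> ge0_mfun (fun w => k * f w).
Proof.
move=> k0 [mf f0]; split=> [|w]; last exact: mulr_ge0.
by apply: measurable_funM => //; exact: measurable_cst.
Qed.

Lemma ge0_mfunD (f g : Omega -> R) :
  ge0_mfun f -> ge0_mfun g -> ge0_mfun (fun w => f w + g w).
Proof.
move=> [mf f0] [mg g0].
by split=> [|w]; [exact: measurable_funD | exact: addr_ge0].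
Qed.

Lemma ge0_mfun_sum (I : Type) (s : seq I) (Q : pred I) (f : I -> Omega -> R) :
  (forall i, ge0_mfun (f i)) -> ge0_mfun (fun w => \sum_(i <- s | Q i) f i w).
Proof.
move=> hf; split=> [|w]; last by apply: sumr_ge0 => i _; exact: (hf i).2.
under eq_fun do rewrite -big_filter.
by apply: measurable_sum => i; exact: (hf i).1.
Qed.

Local Open Scope ereal_scope.

Lemma ge0_expectation_sum (I : Type) (s : seq I) (Q : pred I) (f : I -> Omega -> R) :
  (forall i, ge0_mfun (f i)) ->
  'E_P[fun w => (\sum_(i <- s | Q i) f i w)%R] = \sum_(i <- s | Q i) 'E_P[f i].
Proof.
move=> hf; rewrite unlock -big_filter.
under eq_integral do rewrite -big_filter -sumEFin.
apply: ge0_integral_sum => [//|i|i w _]; first exact/measurable_EFinP/(hf i).1.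
by rewrite lee_fin; exact: (hf i).2.
Qed.

Lemma ge0_expectationD (f g : Omega -> R) : ge0_mfun f -> ge0_mfun g ->
  'E_P[fun w => (f w + g w)%R] = 'E_P[f] + 'E_P[g].
Proof.
move=> [mf f0] [mg g0]; rewrite unlock; under eq_integral do rewrite EFinD.
by apply: ge0_integralD => // [w _||w _|]; rewrite ?lee_fin //; exact/measurable_EFinP.
Qed.

Lemma ge0_expectation_le (f g : Omega -> R) : ge0_mfun f -> ge0_mfun g ->
  (forall w, f w <= g w)%R -> 'E_P[f] <= 'E_P[g].
Proof.
move=> hf hg fg; apply: (expectation_le hf.1 hg.1 hf.2 hg.2).
exact: aeW.
Qed.

Lemma expectation_scale_indic (k : R) (A : set Omega) : (0 <= k)%R -> measurable A ->
  'E_P[fun w => (k * \1_A w)%R] = k%:E * P A.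
Proof.
move=> k0 mA; rewrite unlock; under eq_integral do rewrite EFinM.
rewrite (ge0_integralZl_EFin _ measurableT _ _ k0).
- by rewrite integral_indic // setIT.
- by move=> w _; rewrite lee_fin indicE.
- exact/measurable_EFinP/measurable_indic.
Qed.

End ge0_expectation.

Section countable_valued.
Context {d : measure_display} {Omega : measurableType d} {T : countType}.
Implicit Types Y Z : Omega -> T.

Lemma measurable_preimage_countable Y (A : set T) :
  (forall t, measurable (Y @^-1` [set t])) -> measurable (Y @^-1` A).
Proof.
move=> mY; have -> : Y @^-1` A = \bigcup_(t in A) Y @^-1` [set t].
  by apply/seteqP; split=> [w Aw|w [t At /= ->]] //; exists (Y w).
rewrite bigcup_mkcond; apply: countable_bigcupT_measurable => // t.
by case: ifP => _; [exact: mY | exact: measurable0].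
Qed.

Lemma measurable_rel_countable Y Z (r : rel T) :
  (forall t, measurable (Y @^-1` [set t])) ->
  (forall t, measurable (Z @^-1` [set t])) ->
  measurable [set w | r (Y w) (Z w)].
Proof.
move=> mY mZ; have -> : [set w | r (Y w) (Z w)] =
    \bigcup_t (Y @^-1` [set t] `&` Z @^-1` [set u | r t u]).
  by apply/seteqP; split=> [w|w [t _ [/= -> //]]]; exists (Y w).
apply: countable_bigcupT_measurable => // t.
by apply: measurableI; [exact: mY | exact: measurable_preimage_countable].
Qed.

End countable_valued.

Section indicators.
Context {Omega : Type} {R : numDomainType}.

Lemma indic_bool (g : Omega -> bool) w : \1_[set w | g w] w = (g w)%:R :> R.
Proof.
rewrite indicE; case: (boolP (g w)) => h; first by rewrite mem_set.
by rewrite memNset //; exact/negP.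
Qed.

Lemma sum_indic_le_indic (I : eqType) (s : seq I) (Q : pred I)
    (E : I -> set Omega) (A : set Omega) (w : Omega) :
  uniq s -> (forall i j, E i w -> E j w -> i = j) -> (forall i, Q i -> E i `<=` A) ->
  \sum_(i <- s | Q i) \1_(E i) w <= \1_A w :> R.
Proof.
move=> us Ew EA; have [[i /and3P[si Qi /set_mem Eiw]]|] :=
  pselect (exists i, [&& i \in s, Q i & w \in E i]).
- rewrite -big_filter (bigD1_seq i) ?mem_filter ?Qi ?filter_uniq //=.
  rewrite big1 => [|j /negPf ji]; last first.
    by rewrite indicE memNset // => /(Ew _ _ Eiw) ij; rewrite ij eqxx in ji.
  by rewrite addr0 !indicE !mem_set //; exact: EA Eiw.
- move=> none; rewrite big_seq_cond big1 ?indicE // => i /andP[si Qi].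
  by rewrite indicE memNset // => Eiw; apply: none; exists i; rewrite si Qi mem_set.
Qed.

Lemma sum2_indic_le_indic (I J : eqType) (s : seq I) (t : seq J) (Q : I -> pred J)
    (E : I -> J -> set Omega) (A : set Omega) (w : Omega) :
  uniq s -> uniq t ->
  (forall i i' j j', E i j w -> E i' j' w -> i = i' /\ j = j') ->
  (forall i j, Q i j -> E i j `<=` A) ->
  \sum_(i <- s) \sum_(j <- t | Q i j) \1_(E i j) w <= \1_A w :> R.
Proof.
move=> us ut Ew EA.
pose Ei i := [set w' | exists2 j, Q i j & E i j w'].
apply: (@le_trans _ _ (\sum_(i <- s) \1_(Ei i) w)).
  apply: ler_sum => i _; apply: sum_indic_le_indic => // [j j' Eij Eij'|j Qij w' Ew'].
    exact: (Ew _ _ _ _ Eij Eij').2.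
  by exists j.
apply: sum_indic_le_indic => // [i i' [j _ Eij] [j' _ Eij']|i _ w' [j Qij]].
  exact: (Ew _ _ _ _ Eij Eij').1.
exact: EA.
Qed.

End indicators.

Section grid.
Context {R : numFieldType}.

Definition grid_lo (n k : nat) : set R := [set` `[k%:R / n%:R, k.+1%:R / n%:R[].
Definition grid_hi (n k : nat) : set R := [set` `[k.+1%:R / n%:R, 1]].

Lemma sum_ord_natr n : \sum_(k < n) (k%:R : R) = n%:R * (n%:R - 1) / 2.
Proof.
elim: n => [|n IH]; first by rewrite big_ord0 mul0r mul0r.
by rewrite big_ord_recr /= IH -natr1; field.
Qed.

Lemma sum_grid_mass n : (0 < n)%N ->
  \sum_(k < n) (k.+1%:R / n%:R - k%:R / n%:R) * (1 - k.+1%:R / n%:R) =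
  (1 - n%:R^-1) / 2 :> R.
Proof.
move=> n0; have n0' : n%:R != 0 :> R by rewrite pnatr_eq0 -lt0n.
have term (k : nat) : (k.+1%:R / n%:R - k%:R / n%:R) * (1 - k.+1%:R / n%:R) =
    (n%:R - 1) / n%:R ^+ 2 - k%:R / n%:R ^+ 2 :> R.
  by rewrite -natr1; field.
under eq_bigr do rewrite term.
by rewrite sumrB sumr_const card_ord -mulr_suml sum_ord_natr -mulr_natl; field.
Qed.

Lemma grid_lo_inj n (k k' : nat) (x : R) : (0 < n)%N ->
  grid_lo n k x -> grid_lo n k' x -> k = k'.
Proof.
rewrite /grid_lo /= !in_itv /= => n0 /andP[kx xk] /andP[k'x xk'].
have le_nat i j : i%:R / n%:R <= x -> x < j.+1%:R / n%:R -> (i <= j)%N.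
  move=> ix xj; rewrite -ltnS -(ltr_nat R) -(@ltr_pM2r _ n%:R^-1) ?invr_gt0 ?ltr0n //.
  exact: le_lt_trans ix xj.
by apply/eqP; rewrite eqn_leq !le_nat.
Qed.

End grid.

Section rank_model.
Context {R : realType} {T : countType} {d : measure_display} {Omega : measurableType d}.
Context {P : probability Omega R} {p q : T -> R} {m : nat}.
Context {X : nat -> Omega -> T} {U : nat -> Omega -> R}.
Hypothesis hM : rank_model p q m P X U.

Let mX i t : (i <= m)%N -> measurable (X i @^-1` [set t]).
Proof. exact: hM.1. Qed.

Let mU i : (i <= m)%N -> measurable_fun [set: Omega] (U i).
Proof. exact: hM.2.1. Qed.

Let mUpre i (B : set R) : (i <= m)%N -> measurable B -> measurable (U i @^-1` B).
Proof. by move=> im mB; rewrite -[_ @^-1` _]setTI; exact: mU. Qed.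

Let law_X0 t : P (X 0 @^-1` [set t]) = (q t)%:E.
Proof. exact: hM.2.2.1. Qed.

Let law_X j t : (j < m)%N -> P (X j.+1 @^-1` [set t]) = (p t)%:E.
Proof. by move=> jm; exact: hM.2.2.2.1. Qed.

Let law_U i (B : set R) : (i <= m)%N -> measurable B ->
  P (U i @^-1` B) = lebesgue_measure (B `&` `[0%R, 1%R]).
Proof. exact: hM.2.2.2.2.1. Qed.

Let indep (A : nat -> set T) (B : nat -> set R) : (forall i, measurable (B i)) ->
  P (\big[setI/setT]_(i < m.+1) (X i @^-1` A i `&` U i @^-1` B i)) =
  (\prod_(i < m.+1) (P (X i @^-1` A i) * P (U i @^-1` B i)))%E.
Proof. exact: hM.2.2.2.2.2. Qed.

Definition cell (j : nat) (a b : T) (B1 B0 : set R) : set Omega :=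
  X j.+1 @^-1` [set a] `&` X 0 @^-1` [set b] `&` U j.+1 @^-1` B1 `&` U 0 @^-1` B0.

Lemma measurable_cell j a b B1 B0 : (j < m)%N -> measurable B1 -> measurable B0 ->
  measurable (cell j a b B1 B0).
Proof.
move=> jm mB1 mB0; do !apply: measurableI.
- exact: mX.
- exact: mX.
- exact: mUpre.
- exact: mUpre.
Qed.

Lemma prob_cell j a b B1 B0 : (j < m)%N -> measurable B1 -> measurable B0 ->
  P (cell j a b B1 B0) =
  ((p a * q b)%:E * P (U j.+1 @^-1` B1) * P (U 0 @^-1` B0))%E.
Proof.
move=> jm mB1 mB0.
pose sel (Z : Type) (z0 z1 z : Z) i := if i == 0 then z0 else if i == j.+1 then z1 else z.
pose E i := X i @^-1` sel _ [set b] [set a] setT i `&` U i @^-1` sel _ B0 B1 setT i.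
have -> : cell j a b B1 B0 = \big[setI/setT]_(i < m.+1) E i.
  rewrite -bigcap_mkord; apply/seteqP; split=> [w [[[Xa Xb] UB1] UB0] i _|w Iw].
    by rewrite /E /sel; case: eqP => [->|_] //; case: eqP => [->|_].
  have [] := Iw 0%N isT; have [] := Iw j.+1 jm.
  by rewrite /E /sel /= eqxx.
rewrite indep => [|i]; last by rewrite /sel; case: ifP => //; case: ifP.
rewrite (bigD1 ord0) //= (bigD1 (Ordinal (jm : j.+1 < m.+1)%N)) //=.
rewrite big1 => [|i /andP[i0 ij]].
  rewrite /sel /= eqxx law_X0 law_X // mule1 EFinM muleACA.
  by rewrite [((q b)%:E * _)%E]muleC [(P (U 0 @^-1` B0) * _)%E]muleC muleA.
have i0' : i != 0 :> nat by apply: contraNneq i0 => i0; apply/eqP/val_inj.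
have ij' : i != j.+1 :> nat by apply: contraNneq ij => ij; apply/eqP/val_inj.
by rewrite /E /sel (negPf i0') (negPf ij') !preimage_setT probability_setT mule1.
Qed.

Lemma prob_U_itv i (b1 b2 : bool) (x y : R) :
  (i <= m)%N -> 0 <= x -> x <= y -> y <= 1 ->
  P (U i @^-1` [set` Interval (BSide b1 x) (BSide b2 y)]) = (y - x)%:E.
Proof.
move=> im x0 xy y1; rewrite law_U // setIidl; last first.
  move=> z /=; rewrite !in_itv /= => /andP[/lteifW xz /lteifW zy].
  by rewrite (le_trans x0 xz) (le_trans zy y1).
rewrite lebesgue_measure_itv /=; case: (eqVneq x y) => [<-|/eqP xy'].
  by rewrite subrr; case: ifP => // _; rewrite subee.
have x_lt_y : x < y by rewrite lt_neqAle; apply/andP; split => //; exact/eqP.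
by rewrite ifT ?EFinB //; case: b1; case: b2; rewrite /= bnd_simp.
Qed.

Context {lt : rel T}.
Hypothesis lt_irr : irreflexive lt.

Definition strictly_below j : set Omega := [set w | lt (X j.+1 w) (X 0 w)].
Definition tie_below j : set Omega :=
  [set w | (X j.+1 w == X 0 w) && (U j.+1 w < U 0 w)].

Lemma rank_statE w : (rank_stat lt m X U w)%:R =
  \sum_(j < m) (\1_(strictly_below j) w + \1_(tie_below j) w) :> R.
Proof. by rewrite natr_sum; apply: eq_bigr => j _; rewrite natrD !indic_bool. Qed.

Lemma ge0_mfun_rank : ge0_mfun (fun w => (rank_stat lt m X U w)%:R : R).
Proof.
under eq_fun do rewrite rank_statE.
apply: ge0_mfun_sum => j; apply: ge0_mfunD; apply: ge0_mfun_indic.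
  by apply: measurable_rel_countable => t; exact: mX.
have -> : tie_below j = [set w | X j.+1 w == X 0 w] `&`
    ([set: Omega] `&` (fun w => U j.+1 w < U 0 w) @^-1` [set true]).
  by apply/seteqP; split=> w /=; [case/andP | case=> h1 [_ h2]; apply/andP].
apply: measurableI; first by apply: measurable_rel_countable => t; exact: mX.
by apply: measurable_fun_ltr => //; exact: mU.
Qed.

Lemma rank_stat_le w : (rank_stat lt m X U w <= m)%N.
Proof.
rewrite /rank_stat -[leqRHS]card_ord -sum1_card; apply: leq_sum => j _.
case: (boolP (lt _ _)) => [lt0 | _]; last by case: (_ && _).
by rewrite (_ : _ == _ = false) //; apply: contraTF lt0 => /eqP ->; rewrite lt_irr.
Qed.

Lemma expectation_rank_uniform : rank_uniform lt m P X U ->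
  ('E_P[fun w => (rank_stat lt m X U w)%:R%R] = (m%:R / 2)%:E)%E.
Proof.
move=> unif; pose Rk k := [set w | rank_stat lt m X U w = k].
have mRk k : measurable (Rk k).
  have := ge0_mfun_rank.1 measurableT [set k%:R] (measurable_set1 _).
  rewrite setTI; congr measurable; apply/seteqP.
  by split=> w /=; [move/eqP; rewrite eqr_nat => /eqP | move=> ->].
have rank_sum w : (rank_stat lt m X U w)%:R = \sum_(k < m.+1) k%:R * \1_(Rk k) w :> R.
  rewrite (bigD1 (Ordinal (rank_stat_le w : rank_stat lt m X U w < m.+1)%N)) //=.
  rewrite indicE mem_set // mulr1 big1 ?addr0 // => k kr.
  rewrite indicE memNset ?mulr0 //= => rk.
  by move: kr; rewrite -(inj_eq val_inj) /= rk eqxx.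
under eq_fun do rewrite rank_sum.
rewrite ge0_expectation_sum => [|k]; last exact/ge0_mfun_scale/ge0_mfun_indic.
have Ek (k : 'I_m.+1) :
    ('E_P[fun w => (k%:R * \1_(Rk k) w)%R] = (k%:R / m.+1%:R)%:E)%E.
  by rewrite expectation_scale_indic ?ler0n // unif -?EFinM // -ltnS.
rewrite (eq_bigr _ (fun k _ => Ek k)).
by rewrite sumEFin -mulr_suml sum_ord_natr -natr1; congr (_%:E); field.
Qed.

Definition below_minorant (F : seq T) (j : nat) (w : Omega) : R :=
  \sum_(a <- F) \sum_(b <- F | lt a b) \1_(cell j a b setT setT) w.

Definition tie_minorant (F : seq T) (n j : nat) (w : Omega) : R :=
  \sum_(a <- F) \sum_(k < n) \1_(cell j a a (grid_lo n k) (grid_hi n k)) w.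

Definition rank_minorant (F : seq T) (n : nat) (w : Omega) : R :=
  \sum_(j < m) (below_minorant F j w + tie_minorant F n j w).

Lemma rank_minorant_le F n w : uniq F -> (0 < n)%N ->
  rank_minorant F n w <= (rank_stat lt m X U w)%:R.
Proof.
move=> uF n0; rewrite rank_statE; apply: ler_sum => j _; apply: lerD.
  apply: sum2_indic_le_indic => //.
    move=> a a' b b' [[[/= Xa Xb] _] _] [[[/= Xa' Xb'] _] _].
    by split; [rewrite -Xa -Xa' | rewrite -Xb -Xb'].
  by move=> a b ab w' [[[/= Xa Xb] _] _]; rewrite /strictly_below /= Xa Xb.
apply: sum2_indic_le_indic => //; first exact: index_enum_uniq.
  move=> a a' k k' [[[/= Xa _] Uk] _] [[[/= Xa' _] Uk'] _].
  by split; [rewrite -Xa -Xa' | apply: val_inj; exact: grid_lo_inj n0 Uk Uk'].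
move=> a k _ w' [[[/= Xa Xa'] U1] U0].
move: U1 U0; rewrite /grid_lo /grid_hi /= !in_itv /= => /andP[_ U1k] /andP[U0k _].
by rewrite /tie_below /= Xa Xa' eqxx (lt_le_trans U1k U0k).
Qed.

Lemma ge0_mfun_below_minorant F j : (j < m)%N -> ge0_mfun (below_minorant F j).
Proof.
move=> jm; do 2!apply: ge0_mfun_sum => ?.
by apply: ge0_mfun_indic; exact: measurable_cell.
Qed.

Lemma ge0_mfun_tie_minorant F n j : (j < m)%N -> ge0_mfun (tie_minorant F n j).
Proof.
move=> jm; do 2!apply: ge0_mfun_sum => ?.
by apply: ge0_mfun_indic; apply: measurable_cell => //; exact: measurable_itv.
Qed.

Lemma ge0_mfun_rank_minorant F n : ge0_mfun (rank_minorant F n).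
Proof.
apply: ge0_mfun_sum => j; apply: ge0_mfunD.
  exact: ge0_mfun_below_minorant.
exact: ge0_mfun_tie_minorant.
Qed.

Lemma expectation_below_minorant F j : (j < m)%N ->
  ('E_P[below_minorant F j] = (\sum_(a <- F) \sum_(b <- F | lt a b) p a * q b)%:E)%E.
Proof.
move=> jm; rewrite ge0_expectation_sum => [|a]; last first.
  by apply: ge0_mfun_sum => b; apply: ge0_mfun_indic; exact: measurable_cell.
rewrite -sumEFin; apply: eq_bigr => a _.
rewrite ge0_expectation_sum => [|b]; last by apply: ge0_mfun_indic; exact: measurable_cell.
rewrite -sumEFin; apply: eq_bigr => b _.
rewrite expectation_indic ?prob_cell //; last exact: measurable_cell.
by rewrite !(preimage_setT (U _)) !probability_setT !mule1.
Qed.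

Lemma expectation_tie_minorant F n j : (j < m)%N -> (0 < n)%N ->
  ('E_P[tie_minorant F n j] =
   (\sum_(a <- F) p a * q a * ((1 - n%:R^-1) / 2))%:E)%E.
Proof.
move=> jm n0; have mgrid a k : measurable (cell j a a (grid_lo n k) (grid_hi n k)).
  by apply: measurable_cell => //; exact: measurable_itv.
rewrite ge0_expectation_sum => [|a]; last first.
  by apply: ge0_mfun_sum => k; exact: ge0_mfun_indic.
rewrite -sumEFin; apply: eq_bigr => a _.
rewrite ge0_expectation_sum => [|k]; last exact: ge0_mfun_indic.
rewrite -(@sum_grid_mass R n n0) mulr_sumr -sumEFin; apply: eq_bigr => k _.
have n_gt0 : (0 : R) < n%:R by rewrite ltr0n.
have k_ge0 : (0 : R) <= k%:R / n%:R by rewrite divr_ge0 ?ler0n.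
have k_le : (k%:R : R) / n%:R <= k.+1%:R / n%:R by rewrite ler_pM2r ?invr_gt0 // ler_nat.
have k1_le : (k.+1%:R : R) / n%:R <= 1 by rewrite ler_pdivrMr // mul1r ler_nat.
rewrite expectation_indic // prob_cell //; try exact: measurable_itv.
by rewrite !prob_U_itv // -!EFinM; congr (_%:E); ring.
Qed.

Lemma expectation_rank_minorant F n : (0 < n)%N ->
  ('E_P[rank_minorant F n] = (m%:R * below_prob_lb lt p q F n)%:E)%E.
Proof.
move=> n0; rewrite ge0_expectation_sum => [|j]; last first.
  by apply: ge0_mfunD; [exact: ge0_mfun_below_minorant | exact: ge0_mfun_tie_minorant].
have Ej (j : 'I_m) :
    ('E_P[fun w => (below_minorant F j w + tie_minorant F n j w)%R] =
     (below_prob_lb lt p q F n)%:E)%E.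
  rewrite ge0_expectationD; last 2 first.
  - exact: ge0_mfun_below_minorant.
  - exact: ge0_mfun_tie_minorant.
  rewrite expectation_below_minorant // expectation_tie_minorant // -EFinD.
  by rewrite /below_prob_lb -mulr_suml mulrA.
by rewrite (eq_bigr _ (fun j _ => Ej j)) sumEFin sumr_const card_ord mulr_natl.
Qed.

Lemma below_prob_lb_le_half F n : uniq F -> (0 < n)%N -> (0 < m)%N ->
  rank_uniform lt m P X U -> below_prob_lb lt p q F n <= 1 / 2.
Proof.
move=> uF n0 m0 unif.
have := ge0_expectation_le P _ _ (ge0_mfun_rank_minorant F n) ge0_mfun_rank
  (fun w => rank_minorant_le F n w uF n0).
rewrite expectation_rank_minorant // expectation_rank_uniform // lee_fin.
by rewrite mulrC -ler_pdivlMr ?ltr0n // mulrAC divff ?mul1r // pnatr_eq0 -lt0n.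
Qed.

End rank_model.

Theorem theorem3p6 (R : realType) (T : countType) (p q : T -> R) :
  is_prob_distr p -> is_prob_distr q -> p <> q ->
  exists lt : rel T, strict_total_order lt /\
    (forall (m : nat), (1 <= m)%N ->
     forall (d : measure_display) (Omega : measurableType d)
            (P : probability Omega R)
            (X : nat -> Omega -> T) (U : nat -> Omega -> R),
       rank_model p q m P X U -> ~ rank_uniform lt m P X U).
Proof.
move=> hp hq npq; pose S x := p x < q x.
have hlt := split_order_total S.
have hS a b : q a <= p a -> p b < q b -> split_order S a b.
  by move=> ba ab; apply: split_orderNS; rewrite /S // -leNgt.
have [F [n [uF n0 lb_gt]]] := exists_below_prob_lb_gt _ _ _ hlt hS hp hq npq.
exists (split_order S); split=> // m m1 d Omega P X U hM unif.
have := below_prob_lb_le_half hM hlt.1 F n uF n0 m1 unif.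
by rewrite leNgt lb_gt.
Qed.
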